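(* Let $n\ge1$, $T\ge1$, $\theta\in(0,1]$, and let $C_1,\dots,C_T\in\mathbb{R}^{1\times n}$ be i.i.d. random row vectors such that $C_t=0$ with probability $1-\theta$ and, with probability $\theta$, $C_t$ is uniformly distributed on $\{e_1^\top,\dots,e_n^\top\}$ (the canonical basis vectors of $\mathbb{R}^n$). Let $O_T^\top O_T=\sum_{t=1}^T C_t^\top C_t$. Then for any $\delta\in(0,1)$, if $T\ge\frac{8n}{\theta}\log(\frac n\delta)$, with probability at least $1-2\delta$, $$\frac{\theta T}{2n}I_n\preceq O_T^\top O_T\preceq\frac{2e\theta T}{n}I_n.$$
   Context: $\preceq$ is the Löwner (positive semidefinite) order. *)

From HB Require Import structures.
From mathcomp Require Import all_boot all_order all_algebra.
From mathcomp Require Import boolp reals sequences exp.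
Set Implicit Arguments. Unset Strict Implicit. Unset Printing Implicit Defensive.
Import Order.TTheory GRing.Theory Num.Theory.
Local Open Scope ring_scope.

Definition psd (R : realType) (n : nat) (M : 'M[R]_n) : Prop :=
  forall x : 'cV[R]_n, 0 <= (x^T *m M *m x) 0 0.

Definition loewner_le (R : realType) (n : nat) (A B : 'M[R]_n) : Prop :=
  psd (B - A).

(* Outcome of one draw: None = the zero row vector, Some i = e_i^T. *)
Definition crow (R : realType) (n : nat) (c : option 'I_n) : 'rV[R]_n :=
  match c with None => 0 | Some i => delta_mx 0 i end.

Definition cmass (R : realType) (n : nat) (theta : R) (c : option 'I_n) : R :=
  match c with None => 1 - theta | Some _ => theta / n%:R end.

Definition OtO (R : realType) (n T : nat) (w : {ffun 'I_T -> option 'I_n}) : 'M[R]_n :=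
  \sum_(t < T) (crow R (w t))^T *m crow R (w t).

Definition iid_prob (R : realType) (n T : nat) (theta : R)
  (E : {ffun 'I_T -> option 'I_n} -> Prop) : R :=
  \sum_(w : {ffun 'I_T -> option 'I_n} | `[< E w >]) \prod_(t < T) cmass theta (w t).

From HB Require Import structures.
From mathcomp Require Import all_boot all_order all_algebra.
From mathcomp Require Import boolp reals sequences exp.
From mathcomp Require Import ring lra.
Import Order.TTheory GRing.Theory Num.Theory.
Local Open Scope ring_scope.

(* O_T^T O_T is the diagonal matrix of the hit counts N_i = #{t | C_t = e_i^T}, so both
   Loewner bounds hold as soon as every N_i lies in [mu/2, 2 e mu], where mu = T theta / n.
   N_i is a sum of T independent Bernoulli(theta/n) variables, hence
   E[exp (s N_i)] = (1 + theta/n (e^s - 1))^T <= exp (mu (e^s - 1)).  Chernoff's bound with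
   s = -1/2 and s = 1 bounds each of the 2n tails by exp (-mu/8), and the hypothesis on T
   says exactly that exp (-mu/8) <= delta/n.  Markov's inequality applied to the sum of the
   2n exponentials, which is >= 1 outside the band, performs the union bound. *)

Section LoewnerDiag.
Variables (R : realType) (n : nat).

Lemma psd_diag_mx (d : 'rV[R]_n) : (forall i, 0 <= d 0 i) -> psd (diag_mx d).
Proof.
move=> d_ge0 x; rewrite mul_mx_diag mxE; apply: sumr_ge0 => j _.
by rewrite !mxE mulrAC -expr2 mulr_ge0 ?sqr_ge0.
Qed.

Lemma loewner_le_diag_mx (d1 d2 : 'rV[R]_n) :
  (forall i, d1 0 i <= d2 0 i) -> loewner_le (diag_mx d1) (diag_mx d2).
Proof.
move=> le_d; rewrite /loewner_le -linearB; apply: psd_diag_mx => i.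
by rewrite !mxE subr_ge0.
Qed.

End LoewnerDiag.

Definition hits (R : realType) {n T : nat} (w : {ffun 'I_T -> option 'I_n}) (i : 'I_n) : R :=
  \sum_(t < T) (w t == Some i)%:R.

Lemma OtO_diag (R : realType) (n T : nat) (w : {ffun 'I_T -> option 'I_n}) :
  OtO R w = diag_mx (\row_i hits R w i).
Proof.
apply/matrixP => j k; rewrite /OtO summxE !mxE /hits -sumrMnl.
apply: eq_bigr => t _; case: (w t) => [i|] /=; last by rewrite trmx0 mul0mx mxE mul0rn.
rewrite trmx_delta mul_delta_mx !mxE [Some i == _]/eq_op /=.
have [->|nejk] := eqVneq j k; first by rewrite andbb eq_sym.
by have [ji|] := eqVneq j i; rewrite ?mulr0n // -ji [k == j]eq_sym (negbTE nejk) andbF.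
Qed.

Lemma expR_neg_half_le (R : realType) : expR (- (1 / 2)) <= 5 / 8 :> R.
Proof.
have : (1 + 1 / 8) ^+ 4 <= expR (1 / 2) :> R.
  rewrite [1 / 2](_ : _ = 4%:R * (1 / 8)) ?expRM_natl; last by field.
  by rewrite lerXn2r ?nnegrE ?expR_ge0 ?expR_ge1Dx //; lra.
move=> h; rewrite expRN -[leRHS]invrK lef_pV2 ?posrE ?expR_gt0 ?invf_div //; last lra.
by rewrite [_ ^+ 4](_ : _ = 6561 / 4096) in h; [lra | field].
Qed.

Lemma expR_neg_le (R : realType) (x p q : R) :
  0 < p -> 0 < q -> ln (p / q) <= x -> expR (- x) <= q / p.
Proof.
move=> p_gt0 q_gt0 le_x; have pq_gt0 : 0 < p / q by rewrite divr_gt0.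
by rewrite -[leRHS]lnK ?posrE ?divr_gt0 // ler_expR -invf_div lnV ?posrE // lerN2.
Qed.

Lemma out_of_band_expR_ge1 (R : realType) (m x : R) : ~~ (m / 2 <= x <= 2 * expR 1 * m) ->
  1 <= expR (m / 4 - x / 2) + expR (x - 2 * expR 1 * m).
Proof.
rewrite negb_and -!ltNge => /orP[x_lt|x_gt].
  have : 1 < expR (m / 4 - x / 2) by rewrite expR_gt1; lra.
  by have := expR_ge0 (x - 2 * expR 1 * m); lra.
have : 1 < expR (x - 2 * expR 1 * m) by rewrite expR_gt1; lra.
by have := expR_ge0 (m / 4 - x / 2); lra.
Qed.

Section IidExpectation.
Local Set Implicit Arguments. Local Unset Strict Implicit.
Variables (R : realType) (n T : nat) (theta : R).
Local Notation draws := {ffun 'I_T -> option 'I_n}.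

Definition iid_expect (F : draws -> R) : R :=
  \sum_(w : draws) (\prod_(t < T) cmass theta (w t)) * F w.

Lemma iid_expect_prod (g : option 'I_n -> R) :
  iid_expect (fun w => \prod_(t < T) g (w t)) = (\sum_c cmass theta c * g c) ^+ T.
Proof.
transitivity (\prod_(t < T) \sum_c cmass theta c * g c); last first.
  by rewrite prodr_const card_ord.
by rewrite bigA_distr_bigA; apply: eq_bigr => w _; rewrite big_split.
Qed.

Lemma eq_iid_expect (F G : draws -> R) : F =1 G -> iid_expect F = iid_expect G.
Proof. by move=> eqFG; apply: eq_bigr => w _; rewrite eqFG. Qed.

Lemma iid_expectZ c F : iid_expect (fun w => c * F w) = c * iid_expect F.
Proof. by rewrite /iid_expect mulr_sumr; apply: eq_bigr => w _; rewrite mulrCA. Qed.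

Lemma iid_expectD F G : iid_expect (fun w => F w + G w) = iid_expect F + iid_expect G.
Proof. by rewrite /iid_expect -big_split; apply: eq_bigr => w _; rewrite mulrDr. Qed.

Lemma iid_expect_sum (I : finType) (F : I -> draws -> R) :
  iid_expect (fun w => \sum_i F i w) = \sum_i iid_expect (F i).
Proof.
by rewrite /iid_expect exchange_big; apply: eq_bigr => w _; rewrite mulr_sumr.
Qed.

Lemma sum_option (F : option 'I_n -> R) : \sum_c F c = F None + \sum_i F (Some i).
Proof.
rewrite (bigD1 None) //=; congr (_ + _).
rewrite (reindex_omap Some id) => [|[]//].
by apply: eq_bigl => i; rewrite eqxx.
Qed.

Hypothesis n_gt0 : (0 < n)%N.

Lemma sum_cmass : \sum_(c : option 'I_n) cmass theta c = 1.
Proof.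
rewrite sum_option sumr_const card_ord /= -[_ *+ n]mulr_natr mulfVK ?subrK //.
by rewrite pnatr_eq0 -lt0n.
Qed.

Lemma iid_expect1 : iid_expect (fun=> 1) = 1.
Proof.
transitivity (iid_expect (fun w => \prod_(t < T) (fun=> 1 : R) (w t))).
  by apply: eq_bigr => w _; rewrite big1_eq.
rewrite (iid_expect_prod (fun=> 1)); under eq_bigr do rewrite mulr1.
by rewrite sum_cmass expr1n.
Qed.

Hypothesis theta_01 : 0 <= theta <= 1.

Lemma cmass_ge0 (c : option 'I_n) : 0 <= cmass theta c.
Proof.
case/andP: theta_01 => th0 th1; case: c => [i|] /=; last by rewrite subr_ge0.
by rewrite divr_ge0.
Qed.

Lemma iid_prob_ge_markov (E : draws -> Prop) (F : draws -> R) :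
  (forall w, 0 <= F w) -> (forall w, ~ E w -> 1 <= F w) ->
  1 - iid_expect F <= iid_prob theta E.
Proof.
move=> F_ge0 notE_F_ge1; rewrite -iid_expect1 /iid_expect -sumrB.
rewrite /iid_prob [leRHS]big_mkcond /=.
apply: ler_sum => w _; rewrite -mulrBr.
have P_ge0 : 0 <= \prod_(t < T) cmass theta (w t) by apply: prodr_ge0 => t _; apply: cmass_ge0.
case: asboolP => [_|/notE_F_ge1 F_ge1].
  by rewrite ler_piMr // lerBlDr lerDl.
by rewrite mulr_ge0_le0 // subr_le0.
Qed.

Local Notation mu := (T%:R * (theta / n%:R)).

Let mu_ge0 : 0 <= mu.
Proof. by case/andP: theta_01 => th0 _; rewrite mulr_ge0 ?divr_ge0. Qed.

Lemma iid_expect_expR_hits s i :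
  iid_expect (fun w => expR (s * hits R w i)) = (1 + theta / n%:R * (expR s - 1)) ^+ T.
Proof.
transitivity (iid_expect (fun w => \prod_(t < T) expR (s * (w t == Some i)%:R))).
  by apply: eq_iid_expect => w; rewrite /hits mulr_sumr expR_sum.
rewrite (iid_expect_prod (fun c => expR (s * (c == Some i)%:R))); congr (_ ^+ _).
have hit_mass c : cmass theta c * expR (s * (c == Some i)%:R) =
    cmass theta c + (c == Some i)%:R * (theta / n%:R * (expR s - 1)).
  have [->|_] := eqVneq c (Some i); last by rewrite !mulr0 mul0r expR0 mulr1 addr0.
  by rewrite /= !mulr1 mul1r; ring.
rewrite (eq_bigr _ (fun c _ => hit_mass c)) big_split /= sum_cmass //.
by rewrite (bigD1 (Some i)) //= eqxx mul1r big1 ?addr0 // => c /negbTE ->; rewrite mul0r.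
Qed.

Lemma iid_expect_expR_hits_le a s i :
  iid_expect (fun w => expR (a + s * hits R w i)) <= expR (a + mu * (expR s - 1)).
Proof.
rewrite (@eq_iid_expect _ (fun w => expR a * expR (s * hits R w i))) => [|w]; last first.
  exact: expRD.
rewrite iid_expectZ expRD ler_wpM2l ?expR_ge0 // iid_expect_expR_hits.
rewrite -[mu * _]mulrA expRM_natl.
have [th0 th1] := andP theta_01.
have p_01 : 0 <= theta / n%:R <= 1.
  by rewrite divr_ge0 ?ler_pdivrMr ?ltr0n // mul1r (le_trans th1) ?ler1n.
rewrite lerXn2r ?nnegrE ?expR_ge0 ?expR_ge1Dx //.
by have := expR_gt0 s; nra.
Qed.

(* s = -1/2: the exponent mu/4 + mu (e^{-1/2} - 1) is <= -mu/8 because e^{-1/2} <= 5/8. *)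
Lemma hits_lower_tail i :
  iid_expect (fun w => expR (mu / 4 - hits R w i / 2)) <= expR (- (mu / 8)).
Proof.
rewrite (@eq_iid_expect _ (fun w => expR (mu / 4 + - (1 / 2) * hits R w i))) => [|w].
  apply: le_trans (iid_expect_expR_hits_le _ _ _) _; rewrite ler_expR.
  by have := mu_ge0; have := expR_neg_half_le R; nra.
by congr expR; ring.
Qed.

Lemma hits_upper_tail i :
  iid_expect (fun w => expR (hits R w i - 2 * expR 1 * mu)) <= expR (- mu).
Proof.
rewrite (@eq_iid_expect _ (fun w => expR (- (2 * expR 1 * mu) + 1 * hits R w i))) => [|w].
  apply: le_trans (iid_expect_expR_hits_le _ _ _) _; rewrite ler_expR.
  by have := mu_ge0; have := expR_ge0 (1 : R); nra.
by congr expR; ring.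
Qed.

Lemma hits_concentration (E : draws -> Prop) :
  (forall w, (forall i, mu / 2 <= hits R w i <= 2 * expR 1 * mu) -> E w) ->
  1 - 2 * n%:R * expR (- (mu / 8)) <= iid_prob theta E.
Proof.
move=> band_E.
pose F (w : draws) :=
  \sum_i (expR (mu / 4 - hits R w i / 2) + expR (hits R w i - 2 * expR 1 * mu)).
have F_ge0 w : 0 <= F w by apply: sumr_ge0 => i _; rewrite addr_ge0 ?expR_ge0.
apply: le_trans (iid_prob_ge_markov F_ge0 _); last first.
  move=> w notE; have /forallPn[i /out_of_band_expR_ge1 out_i] :
      ~~ [forall i, mu / 2 <= hits R w i <= 2 * expR 1 * mu].
    by apply/negP => /forallP in_band; apply/notE/band_E.
  rewrite /F (bigD1 i) //= (le_trans out_i) ?lerDl ?sumr_ge0 // => j _.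
  by rewrite addr_ge0 ?expR_ge0.
have tails (i : 'I_n) : iid_expect (fun w : draws =>
    expR (mu / 4 - hits R w i / 2) + expR (hits R w i - 2 * expR 1 * mu)) <=
    2 * expR (- (mu / 8)).
  rewrite iid_expectD; have := hits_lower_tail i; have := hits_upper_tail i.
  have : expR (- mu) <= expR (- (mu / 8)) by rewrite ler_expR; have := mu_ge0; lra.
  lra.
rewrite lerD2l lerN2 iid_expect_sum; apply: le_trans (ler_sum _ (fun i _ => tails i)) _.
by rewrite sumr_const card_ord -[_ *+ n]mulr_natr mulrAC.
Qed.

End IidExpectation.

Theorem proposition2 (R : realType) (n T : nat) (theta delta : R) :
  (1 <= n)%N -> (1 <= T)%N -> 0 < theta <= 1 -> 0 < delta < 1 ->
  8 * n%:R / theta * ln (n%:R / delta) <= T%:R ->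
  1 - 2 * delta <=
    @iid_prob R n T theta (fun w =>
      loewner_le ((theta * T%:R / (2 * n%:R)) *: 1%:M) (OtO R w) /\
      loewner_le (OtO R w) ((2 * expR 1 * theta * T%:R / n%:R) *: 1%:M)).
Proof.
move=> n_gt0 _ /andP[theta_gt0 theta_le1] /andP[delta_gt0 _] large_T.
have theta_01 : 0 <= theta <= 1 by rewrite (ltW theta_gt0).
have n_neq0 : n%:R != 0 :> R by rewrite pnatr_eq0 -lt0n.
set mu := T%:R * (theta / n%:R).
have tail_le : expR (- (mu / 8)) <= delta / n%:R.
  apply: expR_neg_le; rewrite ?ltr0n //.
  have -> : mu / 8 = T%:R / (8 * n%:R / theta).
    by rewrite /mu; field; rewrite n_neq0 lt0r_neq0.
  by rewrite ler_pdivlMr ?divr_gt0 ?mulr_gt0 ?ltr0n // mulrC.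
have -> : theta * T%:R / (2 * n%:R) = mu / 2 by rewrite /mu; field.
have -> : 2 * expR 1 * theta * T%:R / n%:R = 2 * expR 1 * mu by rewrite /mu; field.
apply: le_trans (hits_concentration n_gt0 theta_01 _).
  by rewrite lerD2l lerN2 -mulrA ler_pM2l // mulrC -ler_pdivlMr ?ltr0n.
move=> w in_band; rewrite OtO_diag !scalemx1 -!diag_const_mx.
by split; apply: loewner_le_diag_mx => i; rewrite !mxE; case/andP: (in_band i).
Qed.
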